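(* Let $d \geq 2$ and let $\varGamma$ be a lattice in $\mathbb{R}^d$. Let $R \in \operatorname{SOS}(\varGamma)$. Then: (1) $b\cdot \operatorname{scal}_\varGamma(R) \subset \operatorname{scal}_\varGamma(R)$ for all $b \in \mathbb{Q}\setminus\{0\}$; (2) if $r \in \mathbb{R}$ satisfies $r\varGamma \sim \varGamma$, then $r \in \mathbb{Q}$; (3) $\alpha\beta^{-1} \in \mathbb{Q}$ for all $\alpha, \beta \in \operatorname{scal}_\varGamma(R)$.
   Context: A lattice in $\mathbb{R}^d$ is a subgroup of the form $\mathbb{Z}b_1\oplus\cdots\oplus\mathbb{Z}b_d$ where $\{b_1,\dots,b_d\}$ is a basis of $\mathbb{R}^d$. Two lattices (more generally, subgroups) $\varGamma,\varGamma'$ of $\mathbb{R}^d$ are commensurate, written $\varGamma\sim\varGamma'$, if $\varGamma\cap\varGamma'$ has finite index both in $\varGamma$ and in $\varGamma'$. For $R\in\operatorname{SO}(d)$, $\operatorname{scal}_\varGamma(R)=\{\alpha\in\mathbb{R} : \varGamma\sim\alpha R\varGamma\}$. The group of similarity rotations is $\operatorname{SOS}(\varGamma)=\{R\in\operatorname{SO}(d) : \varGamma\sim\alpha R\varGamma \text{ for some } \alpha>0\}$, equivalently the set of $R\in\operatorname{SO}(d)$ with $\operatorname{scal}_\varGamma(R)\neq\varnothing$. *)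

From HB Require Import structures.
From mathcomp Require Import all_boot all_order all_algebra.
From mathcomp Require Import reals.
Set Implicit Arguments. Unset Strict Implicit. Unset Printing Implicit Defensive.
Import Order.TTheory GRing.Theory Num.Theory.
Local Open Scope ring_scope.

Section Defs.
Variables (R : realType) (d : nat).

Definition subsetRd := 'rV[R]_d -> Prop.

(* The lattice Z b_1 + ... + Z b_d, where the rows of B are the b_i. *)
Definition lattice_of (B : 'M[R]_d) : subsetRd :=
  fun x => exists z : 'rV[int]_d, x = map_mx intr z *m B.

Definition is_lattice (G : subsetRd) : Prop :=
  exists B : 'M[R]_d, B \in unitmx /\ G = lattice_of B.

Definition setI_Rd (G H : subsetRd) : subsetRd := fun x => G x /\ H x.

Definition finite_index (H G : subsetRd) : Prop :=
  exists s : seq 'rV[R]_d, (forall y, y \in s -> G y) /\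
    forall x, G x -> exists2 y, y \in s & H (x - y).

Definition commensurate (G G' : subsetRd) : Prop :=
  finite_index (setI_Rd G G') G /\ finite_index (setI_Rd G G') G'.

Definition is_SO (Q : 'M[R]_d) : Prop := Q^T *m Q = 1%:M /\ \det Q = 1.

(* alpha Q G = { alpha * Q x | x in G }, with Q acting on column vectors:
   on row vectors x this is x *m Q^T. *)
Definition scale_rot (alpha : R) (Q : 'M[R]_d) (G : subsetRd) : subsetRd :=
  fun y => exists2 x, G x & y = alpha *: (x *m Q^T).

Definition scal (G : subsetRd) (Q : 'M[R]_d) : R -> Prop :=
  fun alpha => commensurate G (scale_rot alpha Q G).

Definition SOS (G : subsetRd) : 'M[R]_d -> Prop :=
  fun Q => is_SO Q /\ exists alpha, 0 < alpha /\ commensurate G (scale_rot alpha Q G).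

Definition scale_set (r : R) (G : subsetRd) : subsetRd :=
  fun y => exists2 x, G x & y = r *: x.

Definition is_rational (r : R) : Prop := exists q : rat, r = ratr q.
End Defs.

From HB Require Import structures.
From mathcomp Require Import all_boot all_order all_algebra.
From mathcomp Require Import reals.
From mathcomp Require Import ring.
From Stdlib Require Import FunctionalExtensionality PropExtensionality IndefiniteDescription.
Import Order.TTheory GRing.Theory Num.Theory.
Local Open Scope ring_scope.

(* Writing the lattice as [Z^d B], the set [alpha Q G] is the lattice with basis
   [alpha B Q^T], and commensurability asks that the intersection has finite index in
   both. A finite-index subgroup of a lattice contains a positive multiple of every
   lattice vector (pigeonhole on the cosets). Applied to [e_1 B], this gives an integer
   relation [k e_1 B = r z B], so [r = k / z_1]; applied twice for [alpha], [beta] it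
   gives [k m beta = alpha z_1]. For (1), with [b = p / q] the integer [n = (p q)^2]
   rescales the finite-index subgroups for [alpha] into ones for [b alpha]. *)

Section LatticeScaling.
Variables (R : realType) (d : nat).
Implicit Types (B M X : 'M[R]_d) (x y : 'rV[R]_d).

Lemma lattice_of0 M : lattice_of M 0.
Proof. by exists 0; rewrite map_mx0 mul0mx. Qed.

Lemma lattice_ofD M x y : lattice_of M x -> lattice_of M y -> lattice_of M (x + y).
Proof. by move=> [u ->] [v ->]; exists (u + v); rewrite map_mxD mulmxDl. Qed.

Lemma lattice_ofB M x y : lattice_of M x -> lattice_of M y -> lattice_of M (x - y).
Proof. by move=> [u ->] [v ->]; exists (u - v); rewrite map_mxB mulmxBl. Qed.

Lemma lattice_ofMn {M x} : lattice_of M x -> forall k, lattice_of M (x *+ k).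
Proof.
move=> Mx; elim=> [|k IHk]; first by rewrite mulr0n; apply: lattice_of0.
by rewrite mulrS; apply: lattice_ofD.
Qed.

Lemma lattice_of_rescale M (a : R) (k : int) x :
  lattice_of M x -> lattice_of (a *: M) ((k%:~R * a) *: x).
Proof.
move=> [u ->]; exists (k *: u).
by rewrite map_mxZ /= -scalemxAr -scalemxAl scalerA mulrC.
Qed.

Lemma lattice_ofZint M (k : int) x : lattice_of M x -> lattice_of M (k%:~R *: x).
Proof. by move=> /(@lattice_of_rescale _ 1 k); rewrite scale1r mulr1. Qed.

Lemma lattice_of_delta M (i : 'I_d) : lattice_of M (delta_mx 0 i *m M).
Proof. by exists (delta_mx 0 i); rewrite (map_delta_mx intr). Qed.

Lemma setI_lattice_ofB M X x y :
  setI_Rd (lattice_of M) (lattice_of X) x -> setI_Rd (lattice_of M) (lattice_of X) y ->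
  setI_Rd (lattice_of M) (lattice_of X) (x - y).
Proof. by move=> [Mx Xx] [My Xy]; split; apply: lattice_ofB. Qed.

Lemma scale_rot_lattice_of (a : R) (Q B : 'M[R]_d) :
  scale_rot a Q (lattice_of B) = lattice_of (a *: (B *m Q^T)).
Proof.
apply: functional_extensionality => x; apply: propositional_extensionality; split.
  by move=> [y [u ->] ->]; exists u; rewrite -scalemxAr mulmxA.
move=> [u ->]; exists (map_mx intr u *m B); first by exists u.
by rewrite -scalemxAr mulmxA.
Qed.

Lemma scale_set_lattice_of (r : R) B :
  scale_set r (lattice_of B) = lattice_of (r *: B).
Proof.
apply: functional_extensionality => x; apply: propositional_extensionality; split.
  by move=> [y [u ->] ->]; exists u; rewrite -scalemxAr.
by move=> [u ->]; exists (map_mx intr u *m B); [exists u | rewrite -scalemxAr].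
Qed.

(* Pigeonhole: two of the multiples x, 2x, ..., (#s + 1)x fall in the same coset. *)
Lemma finite_index_multiple {H L : subsetRd R d} {x} :
  (forall a b, H a -> H b -> H (a - b)) -> (forall k, L (x *+ k)) ->
  finite_index H L -> exists2 k, (0 < k)%N & H (x *+ k).
Proof.
move=> subH Lx [s [_ cover]].
have [f fP] : exists f : 'I_(size s).+1 -> 'I_(size s),
    forall i : 'I_(size s).+1, H (x *+ i.+1 - s`_(f i)).
  apply: (functional_choice (fun (i : 'I_(size s).+1) (j : 'I_(size s)) => H (x *+ i.+1 - s`_j))) => i.
  have [y ys Hy] := cover _ (Lx i.+1).
  by exists (Ordinal (etrans (index_mem y s) ys)); rewrite /= nth_index.
have /injectivePn [i [j neq_ij fij]] : ~~ injectiveb f.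
  by apply/injectiveP => /leq_card; rewrite !card_ord ltnn.
wlog lt_ij : i j neq_ij fij / (i < j)%N.
  move=> hw; have [/hw|/(hw j i)|/val_inj eq_ij] := ltngtP i j.
  - exact.
  - by apply; rewrite 1?eq_sym.
  - by rewrite eq_ij eqxx in neq_ij.
exists (j - i)%N; first by rewrite subn_gt0.
have := subH _ _ (fP j) (fP i).
by rewrite fij opprB addrA subrK -mulrnBr ?subSS // ltnW.
Qed.

(* [c] maps [lattice_of B1] onto [n (lattice_of M)], whose cosets in [lattice_of M] are
   represented by the rows with digits in [0, n). *)
Lemma finite_index_lattice_of_scaled (B1 M : 'M[R]_d) (n : nat) (c : R)
    (H H' : subsetRd R d) :
  (0 < n)%N -> n%:R *: M = c *: B1 -> finite_index H (lattice_of B1) ->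
  (forall h, H h -> H' (c *: h)) -> finite_index H' (lattice_of M).
Proof.
case: n => // n _ nMcB1 [s [sB1 cover]] cHH'.
pose digits (t : 'rV['I_n.+1]_d) : 'rV[int]_d := map_mx (fun j : 'I_n.+1 => (j : nat)%:Z) t.
exists [seq c *: y + map_mx intr z *m M | y <- s, z <- [seq digits t | t : 'rV['I_n.+1]_d]].
split.
  move=> w /allpairsP [[y z] [/= ys _ ->]]; apply: lattice_ofD; last by exists z.
  have [u ->] := sB1 y ys.
  by rewrite scalemxAr -nMcB1 -scalemxAr scaler_nat; apply/lattice_ofMn; exists u.
move=> x [z ->].
pose q : 'rV[int]_d := \row_j ((z ord0 j) %/ n.+1)%Z.
pose t : 'rV['I_n.+1]_d := \row_j inord (absz ((z ord0 j) %% n.+1)%Z).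
have z_divmod : map_mx intr z = n.+1%:R *: map_mx intr q + map_mx intr (digits t) :> 'rV[R]_d.
  apply/rowP => j; rewrite !mxE.
  have mod_ge0 : (0 <= ((z ord0 j) %% n.+1)%Z)%R by rewrite modz_ge0.
  rewrite inordK; last by rewrite -ltz_nat gez0_abs // ltz_pmod.
  by rewrite gez0_abs // {1}(divz_eq (z ord0 j) n.+1) rmorphD rmorphM /= mulrC.
have [y ys Hy] := cover (map_mx intr q *m B1) (ex_intro _ q erefl).
exists (c *: y + map_mx intr (digits t) *m M).
  by apply/allpairsP; exists (y, digits t); rewrite /= map_f ?mem_enum.
rewrite z_divmod mulmxDl -scalemxAl scalemxAr nMcB1 -scalemxAr.
by rewrite opprD addrACA subrr addr0 -scalerBr; apply: cHH'.
Qed.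

Lemma lattice_point_ratio_rational B (i : 'I_d) (k : nat) (z : 'rV[int]_d) (a b : R) :
  B \in unitmx -> (0 < k)%N -> a != 0 ->
  (k%:R * a) *: (delta_mx 0 i *m B) = b *: (map_mx intr z *m B) ->
  is_rational (b / a).
Proof.
move=> uB k_gt0 a0; rewrite !scalemxAl => /(canRL (mulmxK uB)).
rewrite mulmxK // => /rowP /(_ i); rewrite !mxE !eqxx mulr1 => kab.
have z0 : (z ord0 i)%:~R != 0 :> R.
  apply: contra_eq_neq kab => ->; rewrite mulr0.
  by rewrite mulf_neq0 // pnatr_eq0 -lt0n.
exists (k%:Q / (z ord0 i)%:~R); rewrite fmorph_div rmorph_nat rmorph_int.
by apply: (mulIf a0); apply: (mulIf z0); rewrite divfK // mulrAC divfK // kab mulrC.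
Qed.

Lemma scal_ratr_mul B Q (b : rat) (alpha : R) :
  b != 0 -> scal (lattice_of B) Q alpha -> scal (lattice_of B) Q (ratr b * alpha).
Proof.
rewrite /scal !scale_rot_lattice_of => b0 [LfinI XfinI].
set X := B *m Q^T; set p := numq b; set q := denq b.
have q0 : q%:~R != 0 :> R by rewrite intr_eq0 denq_neq0.
have p0 : p != 0 by rewrite numq_eq0.
have b_pq : ratr b = p%:~R / q%:~R :> R.
  by rewrite -{1}(divq_num_den b) fmorph_div !rmorph_int.
(* Both [n] and [n b] are integers, and [n] is an integer multiple of [b]. *)
set n := absz ((p * q) ^+ 2).
have n_gt0 : (0 < n)%N by rewrite absz_gt0 sqrf_eq0 mulf_neq0 ?denq_neq0.
have n_pq : n%:R = ((p * q) ^+ 2)%:~R :> R by rewrite natr_absz ger0_norm ?sqr_ge0.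
have nb_pq : n%:R * ratr b = (p ^+ 3 * q)%:~R :> R.
  by rewrite n_pq b_pq !rmorphM /=; field.
split.
  apply: (@finite_index_lattice_of_scaled B B n n%:R _ _ n_gt0 _ LfinI) => // h [Lh Xh]; split.
    by rewrite n_pq; apply: lattice_ofZint.
  have n_bpq : n%:R = (p * q ^+ 3)%:~R * ratr b :> R.
    by rewrite n_pq b_pq !rmorphM /=; field.
  by rewrite n_bpq -scalerA; apply: lattice_of_rescale.
apply: (@finite_index_lattice_of_scaled (alpha *: X) _ n (n%:R * ratr b) _ _ n_gt0 _ XfinI).
  by rewrite !scalerA mulrA.
move=> h [Lh Xh]; split; first by rewrite nb_pq; apply: lattice_ofZint.
by rewrite n_pq -scalerA; apply: lattice_of_rescale.
Qed.

Lemma commensurate_scale_set_rational B (r : R) : B \in unitmx -> (0 < d)%N ->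
  commensurate (scale_set r (lattice_of B)) (lattice_of B) -> is_rational r.
Proof.
move=> uB d0; rewrite scale_set_lattice_of => -[_ LfinI].
pose i := Ordinal d0.
have [k k0 [[z rz] _]] := finite_index_multiple (setI_lattice_ofB _ _)
  (lattice_ofMn (lattice_of_delta B i)) LfinI.
rewrite -[r]divr1; apply: (lattice_point_ratio_rational B i k z 1 r uB k0 (oner_neq0 R)).
by rewrite mulr1 scaler_nat rz scalemxAr.
Qed.

Lemma scal_ratio_rational B Q (alpha beta : R) :
  B \in unitmx -> Q^T *m Q = 1%:M -> (0 < d)%N ->
  scal (lattice_of B) Q alpha -> scal (lattice_of B) Q beta -> is_rational (alpha / beta).
Proof.
move=> uB orthoQ d0; rewrite /scal !scale_rot_lattice_of => -[LfinIa _] [_ XfinIb].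
have [->|beta0] := eqVneq beta 0; first by exists 0; rewrite invr0 mulr0 rmorph0.
pose i := Ordinal d0; set X := B *m Q^T.
have [m m0 [Lm _]] := finite_index_multiple (setI_lattice_ofB _ _)
  (lattice_ofMn (lattice_of_delta (beta *: X) i)) XfinIb.
have [k k0 [_ [z kmz]]] := finite_index_multiple (setI_lattice_ofB _ _)
  (lattice_ofMn Lm) LfinIa.
apply: (lattice_point_ratio_rational B i (m * k) z beta alpha uB _ beta0).
  by rewrite muln_gt0 m0.
have cancelQ (W : 'rV[R]_d) : W *m Q^T *m Q = W by rewrite -mulmxA orthoQ mulmx1.
rewrite -[LHS]cancelQ -[RHS]cancelQ; congr (_ *m Q).
rewrite -!scalemxAl -!mulmxA.
by move: kmz; rewrite -!scalemxAr -mulrnA -scaler_nat scalerA => ->.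
Qed.

End LatticeScaling.

Theorem mainTheorem1 (R : realType) (d : nat) (hd : (2 <= d)%N)
  (G : subsetRd R d) (hG : is_lattice G) (Q : 'M[R]_d) (hQ : SOS G Q) :
  (forall b : rat, b != 0 -> forall alpha : R,
      scal G Q alpha -> scal G Q (ratr b * alpha)) /\
  (forall r : R, commensurate (scale_set r G) G -> is_rational r) /\
  (forall alpha beta : R, scal G Q alpha -> scal G Q beta ->
      is_rational (alpha * beta^-1)).
Proof.
move: hG hQ => [B [uB ->]] [[orthoQ _] _].
have d0 : (0 < d)%N by apply: leq_trans hd.
split; [|split].
- by move=> b b0 alpha; apply: scal_ratr_mul.
- by move=> r; apply: commensurate_scale_set_rational.
- by move=> alpha beta; apply: scal_ratio_rational.
Qed.
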